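(* Let $(\mathfrak{g},V,\Theta)$ be a Lie-Leibniz triple with associated graded Lie algebra $T_{\leq-1}$. Then $m\circ q+q\circ m=0$ as maps $\Lambda^3(T_{\leq-1})\to T_{\leq-1}$; that is, for every $i\geq1$ the maps $m\circ q$ and $-q\circ m$ from $\Lambda^3(T_{\leq-1})|_{-i-2}$ to $T_{-i-1}$ coincide.
   Context: A (left) Leibniz algebra is a vector space $V$ with bilinear $\circ$ satisfying $x\circ(y\circ z)=(x\circ y)\circ z+y\circ(x\circ z)$; $\{x,y\}=\frac12(x\circ y+y\circ x)$. A Lie-Leibniz triple $(\mathfrak{g},V,\Theta)$ consists of a Lie algebra $\mathfrak{g}$, a $\mathfrak{g}$-module $V$ (action $a\cdot x$) with a Leibniz product $\circ$, and a linear map $\Theta:V\to\mathfrak{g}$ with $x\circ y=\Theta(x)\cdot y$ and $\Theta(x\circ y)=[\Theta(x),\Theta(y)]$. Associated graded Lie algebra: let $K$ be the largest $\mathfrak{g}$-submodule of $S^2(V)$ contained in the kernel of $x\odot y\mapsto\{x,y\}$; let $F$ be the free graded Lie algebra on $V[1]$ (degree $-1$), $F_{-2}\cong S^2(V)$, with $\mathfrak g$ acting by derivations; $K_{-2}=K$, $K_{-i}=\sum_{j=1}^{i-2}[F_{-j},K_{-i+j}]$ ($i\geq3$); $T_{\leq-1}=F/K_\bullet$, $T_{-1}=V[1]$, with induced bracket $\llbracket\,.\,,.\,\rrbracket$ and $\mathfrak g$-action. $\Lambda^\bullet(T_{\leq-1})$ is the graded exterior algebra ($x\wedge y=-(-1)^{|x||y|}y\wedge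 x$), $|_{-i}$ the total-degree $-i$ part. Define $q:\Lambda^2(T_{\leq-1})\to T_{\leq-1}$ by $q(x\wedge y)=\llbracket x,y\rrbracket$ and $m:\Lambda^2(T_{\leq-1})\to T_{\leq-1}$ by $m(x\wedge y)=\Theta(x)\cdot y-(-1)^{|x||y|}\Theta(y)\cdot x$, where $\Theta$ is taken to be $0$ on $T_{\leq-2}$ (so $m(u\wedge v)=2\{u,v\}$ for $u,v\in T_{-1}$, $m(u\wedge x)=\Theta(u)\cdot x$ for $u\in T_{-1}$, $x\in T_{\leq -2}$, and $m=0$ on $\Lambda^2(T_{\leq-2})$). Both extend to $\Lambda^p$ ($p\geq3$) by $f(x_1\wedge\cdots\wedge x_p)=\sum_{\sigma\in\mathrm{Un}(2,p-2)}\epsilon^\sigma f(x_{\sigma(1)}\wedge x_{\sigma(2)})\wedge x_{\sigma(3)}\wedge\cdots\wedge x_{\sigma(p)}$, with $\mathrm{Un}(2,p-2)$ the $(2,p-2)$-unshuffles and $\epsilon^\sigma$ the Koszul sign. *)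

From HB Require Import structures.
From mathcomp Require Import all_boot all_order all_algebra.
Set Implicit Arguments. Unset Strict Implicit. Unset Printing Implicit Defensive.
Import GRing.Theory.
Local Open Scope ring_scope.

Section LieLeibniz.
Variable K : fieldType.

Definition lin (U W : lmodType K) (f : U -> W) : Prop :=
  forall (k : K) x y, f (k *: x + y) = k *: f x + f y.

Definition bilin (A B C : lmodType K) (b : A -> B -> C) : Prop :=
  (forall y, lin (fun x => b x y)) /\ (forall x, lin (b x)).

Definition lie_algebra (G : lmodType K) (lb : G -> G -> G) : Prop :=
  [/\ bilin lb, (forall a, lb a a = 0) &
      (forall a b c, lb a (lb b c) + lb b (lb c a) + lb c (lb a b) = 0)].

Definition lie_module (G : lmodType K) (lb : G -> G -> G)
    (V : lmodType K) (act : G -> V -> V) : Prop :=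
  bilin act /\
  (forall a b x, act (lb a b) x = act a (act b x) - act b (act a x)).

Definition lprod (G V : lmodType K) (act : G -> V -> V) (Th : V -> G) (x y : V) : V :=
  act (Th x) y.

Definition lie_leibniz_triple (G : lmodType K) (lb : G -> G -> G)
    (V : lmodType K) (act : G -> V -> V) (Th : V -> G) : Prop :=
  [/\ lie_algebra lb, lie_module lb act, lin Th,
      (forall x y z, lprod act Th x (lprod act Th y z) =
          lprod act Th (lprod act Th x y) z + lprod act Th y (lprod act Th x z)) &
      (forall x y, Th (lprod act Th x y) = lb (Th x) (Th y))].

Definition symb (G V : lmodType K) (act : G -> V -> V) (Th : V -> G) (x y : V) : V :=
  (2 : K)^-1 *: (lprod act Th x y + lprod act Th y x).

(* Elements of S^2(V) are represented by finite lists s of pairs (u, v),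
   standing for sum_{(u,v) in s} u (.) v. *)
Definition act_S2 (G V : lmodType K) (act : G -> V -> V) (a : G)
    (s : seq (V * V)) : seq (V * V) :=
  flatten (map (fun p => [:: (act a p.1, p.2); (p.1, act a p.2)]) s).

Definition symb_S2 (G V : lmodType K) (act : G -> V -> V) (Th : V -> G)
    (s : seq (V * V)) : V :=
  \sum_(p <- s) symb act Th p.1 p.2.

(* s lies in K = the largest g-submodule of S^2(V) contained in the kernel
   of x (.) y |-> {x,y}, i.e. a_1 . (a_2 . ( ... (a_n . s))) lies in that
   kernel for every word a_1 ... a_n in g. *)
Definition inK (G V : lmodType K) (act : G -> V -> V) (Th : V -> G)
    (s : seq (V * V)) : Prop :=
  forall w : seq G, symb_S2 act Th (foldr (act_S2 act) s w) = 0.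

(* Graded vector spaces concentrated in degrees -1, -2, ... :
   hom n x  means  x is homogeneous of degree -n;  L = (+)_{n >= 1} L_{-n}. *)
Definition graded (L : lmodType K) (hom : nat -> L -> Prop) : Prop :=
  [/\ (forall n, hom n 0),
      (forall n (k : K) x y, hom n x -> hom n y -> hom n (k *: x + y)),
      (forall x, hom 0%N x -> x = 0),
      (forall x, exists s : seq (nat * L),
          (forall p, p \in s -> hom p.1 p.2) /\ x = \sum_(p <- s) p.2) &
      (forall s : seq (nat * L), uniq (map fst s) ->
          (forall p, p \in s -> hom p.1 p.2) ->
          \sum_(p <- s) p.2 = 0 -> forall p, p \in s -> p.2 = 0)].

(* Graded Lie algebras concentrated in degrees <= -1 (Koszul sign
   (-1)^{|x||y|} = (-1)^{i j} for |x| = -i, |y| = -j). *)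
Definition graded_lie (L : lmodType K) (hom : nat -> L -> Prop)
    (br : L -> L -> L) : Prop :=
  [/\ graded hom, bilin br,
      (forall i j x y, hom i x -> hom j y -> hom (i + j)%N (br x y)),
      (forall i j x y, hom i x -> hom j y ->
          br x y = - (((-1 : K) ^+ (i * j)) *: br y x)) &
      (forall i j k x y z, hom i x -> hom j y -> hom k z ->
          br x (br y z) = br (br x y) z + ((-1 : K) ^+ (i * j)) *: br y (br x z))].

Definition graded_lie_morph (L M : lmodType K) (homL : nat -> L -> Prop)
    (brL : L -> L -> L) (homM : nat -> M -> Prop) (brM : M -> M -> M)
    (f : L -> M) : Prop :=
  [/\ lin f, (forall n x, homL n x -> homM n (f x)) &
      (forall x y, f (brL x y) = brM (f x) (f y))].

(* (T, hom, br) together with iota : V ~ T_{-1} (inverse jT) and the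
   g-action actT is the associated graded Lie algebra T_{<=-1} = F / K_.
   It is characterised by its universal property: the free graded Lie
   algebra on V[1] modulo the relations K in degree -2. *)
Definition assoc_graded_lie (G : lmodType K) (lb : G -> G -> G)
    (V : lmodType K) (act : G -> V -> V) (Th : V -> G)
    (T : lmodType K) (hom : nat -> T -> Prop) (br : T -> T -> T)
    (actT : G -> T -> T) (iota : V -> T) (jT : T -> V) : Prop :=
  [/\ graded_lie hom br,
      [/\ lin iota, (forall u, hom 1%N (iota u)), (forall u, jT (iota u) = u) &
          (forall x, hom 1%N x -> iota (jT x) = x)],
      [/\ bilin actT, (forall a n x, hom n x -> hom n (actT a x)),
          (forall a b x, actT (lb a b) x = actT a (actT b x) - actT b (actT a x)),
          (forall a x y, actT a (br x y) = br (actT a x) y + br x (actT a y)) &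
          (forall a u, actT a (iota u) = iota (act a u))],
      (forall s, inK act Th s -> \sum_(p <- s) br (iota p.1) (iota p.2) = 0) &
      [/\
      (forall P : T -> Prop, P 0 -> (forall (k : K) x y, P x -> P y -> P (k *: x + y)) ->
          (forall u, P (iota u)) -> (forall x y, P x -> P y -> P (br x y)) ->
          forall x, P x) &
      (forall (L : lmodType K) (homL : nat -> L -> Prop) (brL : L -> L -> L)
              (phi : V -> L),
          graded_lie homL brL -> lin phi -> (forall u, homL 1%N (phi u)) ->
          (forall s, inK act Th s -> \sum_(p <- s) brL (phi p.1) (phi p.2) = 0) ->
          (exists f : T -> L, graded_lie_morph hom br homL brL f /\
                              forall u, f (iota u) = phi u) /\
          (forall f f' : T -> L,
              graded_lie_morph hom br homL brL f -> (forall u, f (iota u) = phi u) ->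
              graded_lie_morph hom br homL brL f' -> (forall u, f' (iota u) = phi u) ->
              forall x, f x = f' x))]].

(* m on Lambda^2 for homogeneous x in T_{-i}, y in T_{-j}:
   m(x ^ y) = Theta(x).y - (-1)^{ij} Theta(y).x, with Theta = 0 on T_{<=-2}
   and Theta = Theta o jT on T_{-1} = V[1]. *)
Definition mT (G V T : lmodType K) (actT : G -> T -> T) (Th : V -> G)
    (jT : T -> V) (i j : nat) (x y : T) : T :=
  (if i == 1%N then actT (Th (jT x)) y else 0)
  - ((-1 : K) ^+ (i * j)) *: (if j == 1%N then actT (Th (jT y)) x else 0).

(* Koszul signs of the (2,1)-unshuffles acting on x1 ^ x2 ^ x3 of degrees
   -n1, -n2, -n3: (12|3) -> 1, (13|2) -> -(-1)^{n2 n3},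
   (23|1) -> (-1)^{n1 (n2 + n3)}. *)
Definition eps13 (n2 n3 : nat) : K := - ((-1) ^+ (n2 * n3)).
Definition eps23 (n1 n2 n3 : nat) : K := (-1) ^+ (n1 * (n2 + n3)).

Definition m_q (G V T : lmodType K) (br : T -> T -> T) (actT : G -> T -> T)
    (Th : V -> G) (jT : T -> V) (n1 n2 n3 : nat) (x1 x2 x3 : T) : T :=
  mT actT Th jT (n1 + n2) n3 (br x1 x2) x3
  + eps13 n2 n3 *: mT actT Th jT (n1 + n3) n2 (br x1 x3) x2
  + eps23 n1 n2 n3 *: mT actT Th jT (n2 + n3) n1 (br x2 x3) x1.

Definition q_m (G V T : lmodType K) (br : T -> T -> T) (actT : G -> T -> T)
    (Th : V -> G) (jT : T -> V) (n1 n2 n3 : nat) (x1 x2 x3 : T) : T :=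
  br (mT actT Th jT n1 n2 x1 x2) x3
  + eps13 n2 n3 *: br (mT actT Th jT n1 n3 x1 x3) x2
  + eps23 n1 n2 n3 *: br (mT actT Th jT n2 n3 x2 x3) x1.

End LieLeibniz.

From HB Require Import structures.
From mathcomp Require Import all_boot all_order all_algebra.
From mathcomp Require Import zify.
Import GRing.Theory.
Local Open Scope ring_scope.
Set Implicit Arguments. Unset Strict Implicit.

(* Brackets of homogeneous elements have degree <= -2, where Theta vanishes, so
   in (m o q)(x1 ^ x2 ^ x3) only the terms Theta(x_k).[x_i, x_j] survive, while
   (q o m)(x1 ^ x2 ^ x3) contributes [Theta(x_k).x_i, x_j] and, after graded
   antisymmetry, [x_i, Theta(x_k).x_j].  Once the Koszul signs are sorted out,
   the terms involving Theta(x_k) add up to a signed multiple of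
   [Theta(x_k).x_i, x_j] + [x_i, Theta(x_k).x_j] - Theta(x_k).[x_i, x_j],
   which vanishes because g acts on T by derivations.  Neither the Leibniz
   identity nor the characteristic of K plays a role. *)

Section Linear.
Variables (K : fieldType) (U W : lmodType K) (f : U -> W).
Hypothesis f_lin : lin f.

Lemma lin0 : f 0 = 0.
Proof. by have := f_lin 1 0 0; rewrite scale1r addr0 scale1r -{1}[f 0]addr0 => /addrI. Qed.

Lemma linZ k x : f (k *: x) = k *: f x.
Proof. by rewrite -[k *: x]addr0 f_lin lin0 addr0. Qed.

Lemma linB x y : f (x - y) = f x - f y.
Proof. by rewrite -scaleN1r addrC f_lin scaleN1r addrC. Qed.

End Linear.

Lemma signr_odd_eq (R : pzRingType) (a b : nat) :
  odd a = odd b -> (-1) ^+ a = (-1) ^+ b :> R.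
Proof. by move=> ab; rewrite -signr_odd ab signr_odd. Qed.

Section GradedBracket.
Variables (K : fieldType) (T : lmodType K) (hom : nat -> T -> Prop) (br : T -> T -> T).
Hypothesis br_anti : forall i j x y, hom i x -> hom j y ->
  br x y = - (((-1 : K) ^+ (i * j)) *: br y x).

Local Notation sgn i j := ((-1 : K) ^+ (i * j)).

Definition leibniz_defect (d : T -> T) (x y : T) : T :=
  br (d x) y + br x (d y) - d (br x y).

Section DegreePreservingMap.
Variable d : T -> T.
Hypothesis d_hom : forall n x, hom n x -> hom n (d x).

(* The summands of (m o q + q o m)(x1 ^ x2 ^ x3) involving Theta(x1), Theta(x2)
   and Theta(x3) respectively, with d standing for the action of Theta(x_k). *)
Lemma leibniz_defect_first n1 n2 n3 x2 x3 : hom n2 x2 -> hom n3 x3 ->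
  eps23 K n1 n2 n3 *: - (sgn (n2 + n3) n1 *: d (br x2 x3))
  + br (d x2) x3 + eps13 K n2 n3 *: br (d x3) x2 = leibniz_defect d x2 x3.
Proof.
move=> x2_hom x3_hom.
rewrite /eps13 /eps23 (br_anti (d_hom x3_hom) x2_hom) scalerN.
rewrite [((_ + _) * n1)%N]mulnC signrZK scaleNr scalerN opprK [(n3 * n2)%N]mulnC signrZK.
by rewrite /leibniz_defect -addrA addrC.
Qed.

Lemma leibniz_defect_second n1 n2 n3 x1 x3 : hom n1 x1 -> hom n3 x3 ->
  eps13 K n2 n3 *: - (sgn (n1 + n3) n2 *: d (br x1 x3))
  - sgn n1 n2 *: br (d x1) x3 + eps23 K n1 n2 n3 *: br (d x3) x1
  = - (sgn n1 n2 *: leibniz_defect d x1 x3).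
Proof.
move=> x1_hom x3_hom.
rewrite /eps13 /eps23 (br_anti (d_hom x3_hom) x1_hom) scaleNr !scalerN opprK !scalerA.
have -> : (-1) ^+ (n2 * n3) * (-1) ^+ ((n1 + n3) * n2) = sgn n1 n2.
  by rewrite -exprD; apply: signr_odd_eq; lia.
have -> : (-1) ^+ (n1 * (n2 + n3)) * (-1) ^+ (n3 * n1) = sgn n1 n2.
  by rewrite -exprD; apply: signr_odd_eq; lia.
by rewrite /leibniz_defect scalerBr scalerDr opprB opprD addrA.
Qed.

Lemma leibniz_defect_third n1 n2 n3 x1 x2 : hom n1 x1 -> hom n2 x2 ->
  - (sgn (n1 + n2) n3 *: d (br x1 x2))
  - eps13 K n2 n3 *: (sgn n1 n3 *: br (d x1) x2)
  - eps23 K n1 n2 n3 *: (sgn n2 n3 *: br (d x2) x1)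
  = (sgn n1 n3 * sgn n2 n3) *: leibniz_defect d x1 x2.
Proof.
move=> x1_hom x2_hom.
rewrite /eps13 /eps23 (br_anti (d_hom x2_hom) x1_hom) !scaleNr !scalerN !opprK !scalerA.
rewrite [in X in - (X *: _)]mulnDl exprD [in X in X *: br (d x1) x2]mulrC.
have -> : (-1) ^+ (n1 * (n2 + n3)) * (-1) ^+ (n2 * n3) * (-1) ^+ (n2 * n1)
          = sgn n1 n3 * sgn n2 n3.
  by rewrite -!exprD; apply: signr_odd_eq; lia.
by rewrite /leibniz_defect scalerBr scalerDr -addrA addrC.
Qed.

End DegreePreservingMap.

Section GAction.
Variables (G V : lmodType K) (actT : G -> T -> T) (Th : V -> G) (jT : T -> V).
Hypothesis br_linl : forall z, lin (br^~ z).
Hypothesis actT_linl : forall x, lin (actT^~ x).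
Hypothesis actT_hom : forall a n x, hom n x -> hom n (actT a x).

Definition thetaT (n : nat) (x : T) : G := if n == 1%N then Th (jT x) else 0.

Lemma mT_thetaT i j x y :
  mT actT Th jT i j x y = actT (thetaT i x) y - sgn i j *: actT (thetaT j y) x.
Proof. by rewrite /mT /thetaT; case: eqP; case: eqP; rewrite ?(lin0 (actT_linl _)). Qed.

Lemma thetaT_high n x : (1 < n)%N -> thetaT n x = 0.
Proof. by rewrite /thetaT; case: eqP => // ->. Qed.

Lemma m_q_add_q_m_leibniz_defect n1 n2 n3 x1 x2 x3 :
  (0 < n1)%N -> (0 < n2)%N -> (0 < n3)%N ->
  hom n1 x1 -> hom n2 x2 -> hom n3 x3 ->
  m_q br actT Th jT n1 n2 n3 x1 x2 x3 + q_m br actT Th jT n1 n2 n3 x1 x2 x3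
  = leibniz_defect (actT (thetaT n1 x1)) x2 x3
    - sgn n1 n2 *: leibniz_defect (actT (thetaT n2 x2)) x1 x3
    + (sgn n1 n3 * sgn n2 n3) *: leibniz_defect (actT (thetaT n3 x3)) x1 x2.
Proof.
move=> n1_gt0 n2_gt0 n3_gt0 h1 h2 h3.
rewrite -(leibniz_defect_first (actT_hom _) n1 h2 h3).
rewrite -(leibniz_defect_second (actT_hom _) n2 h1 h3).
rewrite -(leibniz_defect_third (actT_hom _) n3 h1 h2).
rewrite /m_q /q_m !mT_thetaT (@thetaT_high (n1 + n2)) ?(@thetaT_high (n1 + n3))
  ?(@thetaT_high (n2 + n3)); try lia.
rewrite !(lin0 (actT_linl _)) !sub0r !(linB (br_linl _)) !(linZ (br_linl _)) !scalerBr.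
(* regroup the nine summands according to the Theta(x_k) they involve *)
by rewrite [LHS](AC (3 * ((2 * 2) * 2)) ((3 * 4 * 6) * (2 * 5 * 8) * (1 * 7 * 9))).
Qed.

End GAction.

End GradedBracket.

Theorem mainTheorem8 (K : fieldType) (charK : [pchar K] =i pred0)
    (G : lmodType K) (lb : G -> G -> G) (V : lmodType K) (act : G -> V -> V)
    (Th : V -> G) (T : lmodType K) (hom : nat -> T -> Prop) (br : T -> T -> T)
    (actT : G -> T -> T) (iota : V -> T) (jT : T -> V) :
  lie_leibniz_triple lb act Th ->
  assoc_graded_lie lb act Th hom br actT iota jT ->
  forall (n1 n2 n3 : nat) (x1 x2 x3 : T),
    (0 < n1)%N -> (0 < n2)%N -> (0 < n3)%N ->
    hom n1 x1 -> hom n2 x2 -> hom n3 x3 ->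
    m_q br actT Th jT n1 n2 n3 x1 x2 x3 + q_m br actT Th jT n1 n2 n3 x1 x2 x3 = 0.
Proof.
move=> _ [[_ [br_linl _] _ br_anti _] _ [[actT_linl _] actT_hom _ actT_der _] _ _].
move=> n1 n2 n3 x1 x2 x3 n1_gt0 n2_gt0 n3_gt0 h1 h2 h3.
have defect0 a x y : leibniz_defect br (actT a) x y = 0.
  by rewrite /leibniz_defect actT_der subrr.
rewrite (m_q_add_q_m_leibniz_defect br_anti Th jT br_linl actT_linl actT_hom) //.
by rewrite !defect0 !scaler0 subr0 addr0.
Qed.
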